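(* In the setting below, $$\left|\sum_{i=1}^{mn}\mathbb{E}(z_i)-m\right|\le 300\sqrt m.$$
   Context: Setting: $m,n$ are positive integers with $n\ge 1200\sqrt m$. A deck of $mn$ cards with $m$ copies of each label $1,\dots,n$ is shuffled uniformly at random. A fixed guessing strategy is used: in round $t=1,\dots,mn$ the Guesser guesses $g_t\in\{1,\dots,n\}$, a function (possibly randomized independently of the deck) of $y_1,\dots,y_{t-1}$, where $y_t\in\{0,1\}$ is the indicator that the $t$-th card has label $g_t$. For a vector $v$, $v_{\le t}:=(v_1,\dots,v_t)$. For $1\le k\le n$, $1\le t\le mn+1$: $a(k,t):=|\{1\le i<t: g_i=k\}|$. Let $Y:=\lfloor \tfrac16\sqrt m\, n\rfloor$. Let $(z_1,\dots,z_{mn})\in\{0,1\}^{mn}$ be a random vector (on an extension of the probability space), with $c(k,t):=|\{1\le i<t: g_i=k,\ z_i=1\}|$, satisfying almost surely: (a) for all $k,t$: $m-\max\{mn-a(k,t)-Y,0\}\le c(k,t)\le m$; (b) for each $t$, conditioned on $g_{\le t},y_{\le t}$, the coordinates of $z_{\le t}$ are mutually independent and independent from $g_{\le mn},y_{\le mn}$; (c) for each $t$, if $a(g_t,t)<mn-Y$ then $\mathbb{E}(z_t\mid g_{\le t},z_{\le t-1})=\frac{m-c(g_t,t)}{mn-a(g_t,t)-Y}$; (d) for each $t$, if $\mathbb{E}(y_t\mid g_{\le t},y_{\le t-1})\le\mathbb{E}(z_t\mid g_{\le t},z_{\le t-1})$ then $y_t\le z_t$. (Such a vector exists.) *)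

From mathcomp Require Import all_boot all_order all_algebra.
From mathcomp Require Import reals.
Set Implicit Arguments. Unset Strict Implicit. Unset Printing Implicit Defensive.
Import Order.TTheory GRing.Theory Num.Theory.
Local Open Scope ring_scope.

Section Defs.
Variables (R : realType) (Omega : finType) (P : Omega -> R).

Definition is_prob_space : Prop :=
  (forall w, 0 <= P w) /\ \sum_(w : Omega) P w = 1.

Definition Prob (A : pred Omega) : R := \sum_(w | A w) P w.

Definition Expect (X : Omega -> R) : R := \sum_(w : Omega) P w * X w.

(* Conditional expectation E(X | W) evaluated at the outcome w
   (meaningful when P(W = W w) > 0, which holds whenever P w > 0). *)
Definition condE (T : eqType) (X : Omega -> R) (W : Omega -> T) (w : Omega) : R :=
  (\sum_(v | W v == W w) P v * X v) / Prob (fun v => W v == W w).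

Definition condP (T : eqType) (A : pred Omega) (W : Omega -> T) (w : Omega) : R :=
  Prob (fun v => A v && (W v == W w)) / Prob (fun v => W v == W w).
End Defs.

(* v_{<= t} in the paper's 1-indexed notation: the first t coordinates
   (rounds are indexed 0 .. N-1 here, so upto X t = (X_0, ..., X_{t-1})). *)
Definition upto (Omega : Type) (T : Type) (N : nat) (X : 'I_N -> Omega -> T)
  (t : nat) (w : Omega) : seq T :=
  [seq X i w | i <- filter (fun i : 'I_N => (i < t)%N) (enum 'I_N)].

Definition acount (Omega : Type) (n N : nat) (g : 'I_N -> Omega -> 'I_n)
  (k : 'I_n) (t : nat) (w : Omega) : nat :=
  #|[pred i : 'I_N | (i < t)%N && (g i w == k)]|.

Definition ccount (Omega : Type) (n N : nat) (g : 'I_N -> Omega -> 'I_n)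
  (z : 'I_N -> Omega -> bool) (k : 'I_n) (t : nat) (w : Omega) : nat :=
  #|[pred i : 'I_N | [&& (i < t)%N, g i w == k & z i w]]|.

Definition arrangements (m n : nat) : {set (m * n).-tuple 'I_n} :=
  [set s : (m * n).-tuple 'I_n | [forall k : 'I_n, count_mem k s == m]].

Definition Yval (R : realType) (m n : nat) : int :=
  Num.floor (Num.sqrt (m%:R : R) * n%:R / 6).

From mathcomp Require Import all_boot all_order all_algebra.
From mathcomp Require Import reals.
From mathcomp Require Import zify ring lra.
Import Order.TTheory GRing.Theory Num.Theory.
Local Open Scope ring_scope.
Set Implicit Arguments. Unset Strict Implicit. Unset Printing Implicit Defensive.

(* Write N = mn, N' = N - Y and e = m / N'.  By (c), when a label is guessed
   after a earlier guesses of it, c of them with z = 1, then z = 1 with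
   probability (m - c) / (N' - a): the z's of a label behave like draws without
   replacement from an urn of N' balls, m of them red.  Hence the excess
   W = c - e a of a label is a drift-corrected walk: E sum_k W^2 is O(m), and
   W N' / (N' - a) = m - N' (m - c) / (N' - a) is a martingale.  Counting only
   the first N/3 + 1 guesses of each label keeps N' - a >= N/3, so
   |E sum_k W| = |E sum_k W a / (N' - a)| = O(sqrt m) by AM-GM; at most two
   labels are guessed more often, and they contribute O(sqrt m) too.  By (a),
   z = 0 once a label has been guessed N' times, which shifts the total by at
   most e Y <= sqrt m / 5; as sum_k a = N, E sum z = e N + O(sqrt m), and
   e N - m = e Y. *)

Section Expectation.
Variables (R : realType) (Omega : finType) (P : Omega -> R).
Hypothesis P_ge0 : forall w, 0 <= P w.
Hypothesis P_sum1 : \sum_w P w = 1.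

Lemma ExpectD f g : Expect P (fun w => f w + g w) = Expect P f + Expect P g.
Proof. by rewrite /Expect -big_split; apply: eq_bigr => w _; rewrite mulrDr. Qed.

Lemma ExpectB f g : Expect P (fun w => f w - g w) = Expect P f - Expect P g.
Proof. by rewrite /Expect -sumrB; apply: eq_bigr => w _; rewrite mulrBr. Qed.

Lemma ExpectZr c f : Expect P (fun w => f w * c) = Expect P f * c.
Proof. by rewrite /Expect mulr_suml; apply: eq_bigr => w _; rewrite mulrA. Qed.

Lemma Expect_cst c : Expect P (fun _ => c) = c.
Proof. by rewrite /Expect -mulr_suml P_sum1 mul1r. Qed.

Lemma Expect_sum (I : finType) (F : I -> Omega -> R) :
  Expect P (fun w => \sum_i F i w) = \sum_i Expect P (F i).
Proof. by rewrite /Expect exchange_big; apply: eq_bigr => w _; rewrite mulr_sumr. Qed.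

Lemma ler_Expect f g :
  (forall w, 0 < P w -> f w <= g w) -> Expect P f <= Expect P g.
Proof.
move=> fg; apply: ler_sum => w _.
have [->|Pw] := eqVneq (P w) 0; first by rewrite !mul0r.
by rewrite ler_wpM2l ?fg // lt0r Pw P_ge0.
Qed.

Lemma eq_Expect f g : (forall w, 0 < P w -> f w = g w) -> Expect P f = Expect P g.
Proof. by move=> fg; apply/eqP; rewrite eq_le !ler_Expect // => w /fg ->. Qed.

Lemma ler_norm_Expect f : `|Expect P f| <= Expect P (fun w => `|f w|).
Proof.
apply: le_trans (ler_norm_sum _ _ _) _.
by apply: ler_sum => w _; rewrite normrM ger0_norm.
Qed.

(* Outcomes in a null class of K have zero weight, so the junk value of
   [condE] there does not matter. *)
Lemma Expect_condE (T : eqType) (K : Omega -> T) (X f : Omega -> R) :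
  (forall v w, K v = K w -> f v = f w) ->
  Expect P (fun w => X w * f w) = Expect P (fun w => condE P X K w * f w).
Proof.
move=> Kf; rewrite /Expect /condE.
pose Pr v := Prob P (fun u => K u == K v).
have PrE v : Pr v = \sum_(u | K u == K v) P u by [].
have Pr_eq v w : K v = K w -> Pr v = Pr w by move=> e; rewrite /Pr e.
have Pr0 v : Pr v = 0 -> P v = 0.
  move=> h; apply/eqP; rewrite eq_le P_ge0 andbT -h PrE (bigD1 v) //=.
  by rewrite lerDl sumr_ge0.
transitivity (\sum_w \sum_v
    (if K v == K w then (P v * X v) * (P w * f w / Pr w) else 0)).
  rewrite exchange_big; apply: eq_bigr => v _; rewrite -big_mkcond /=.
  transitivity (\sum_(w | K v == K w) P v * X v * (P w * f v / Pr v)).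
    rewrite -mulr_sumr -mulr_suml.
    rewrite (eq_bigl (fun w => K w == K v)) => [|w]; last by rewrite eq_sym.
    rewrite -mulr_suml -PrE.
    by have [/Pr0 ->|?] := eqVneq (Pr v) 0; [rewrite !mul0r | field].
  by apply: eq_bigr => w /eqP e; rewrite (Kf w v (esym e)) (Pr_eq w v (esym e)).
by apply: eq_bigr => w _; rewrite -big_mkcond -mulr_suml -/(Pr w); ring.
Qed.

Lemma Expect_sum_telescope (I : finType) (N : nat) (phi : I -> nat -> Omega -> R) :
  (forall i w, phi i 0%N w = 0) ->
  Expect P (fun w => \sum_i phi i N w)
  = \sum_(t < N) (Expect P (fun w => \sum_i phi i t.+1 w)
                  - Expect P (fun w => \sum_i phi i t w)).
Proof.
move=> phi0; pose F t := Expect P (fun w => \sum_i phi i t w).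
rewrite -(big_mkord xpredT (fun t => F t.+1 - F t)) telescope_sumr // /F.
by rewrite /Expect [X in _ - X]big1 ?subr0 // => w _; rewrite big1 ?mulr0.
Qed.

End Expectation.

Lemma ler_normM_amgm (R : realFieldType) (s x y : R) :
  0 < s -> `|x * y| <= x ^+ 2 / (2 * s) + s * y ^+ 2 / 2.
Proof.
move=> s_gt0; rewrite normrM -(real_normK (num_real x)) -(real_normK (num_real y)).
have : 0 <= (`|x| - s * `|y|) ^+ 2 / (2 * s).
  by rewrite divr_ge0 ?sqr_ge0 // mulr_ge0 // ltW.
have -> : (`|x| - s * `|y|) ^+ 2 / (2 * s)
    = `|x| ^+ 2 / (2 * s) + s * `|y| ^+ 2 / 2 - `|x| * `|y|.
  by field; rewrite gt_eqF.
lra.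
Qed.

Lemma sum_gt_le2 (I : finType) (a : I -> nat) (L : nat) :
  (\sum_i a i < 3 * L)%N -> (\sum_i (L < a i) <= 2)%N.
Proof.
move=> small; have : ((\sum_i (L < a i)) * L <= \sum_i a i)%N.
  rewrite big_distrl; apply: leq_sum => i _.
  by case: ltnP => [/ltnW le|_] /=; rewrite ?mul1n ?mul0n.
nia.
Qed.

Lemma sum_overflow_le (I : finType) (a : I -> nat) (M : nat) :
  (\sum_i a i <= 2 * M)%N -> (\sum_i (a i - minn (a i) M) <= \sum_i a i - M)%N.
Proof.
move=> total; have [i0 /= big_i0|small] := pickP (fun i => M < a i)%N; last first.
  by rewrite big1 // => i _; move/negbT: (small i); rewrite -leqNgt; lia.
have split_i0 j : j != i0 -> (a i0 + a j <= \sum_i a i)%N.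
  by move=> j_i0; rewrite (bigD1 i0) //= leq_add2l (bigD1 j) //= leq_addr.
rewrite (bigD1 i0) //= big1 => [|j j_i0]; last by have := split_i0 j j_i0; lia.
have : (a i0 <= \sum_i a i)%N by rewrite (bigD1 i0) //= leq_addr.
lia.
Qed.

Section Counts.
Variables (Omega : Type) (n N : nat).
Variables (g : 'I_N -> Omega -> 'I_n) (z : 'I_N -> Omega -> bool).
Implicit Types (k : 'I_n) (w : Omega) (L : nat).

Lemma card_ltS (p : pred 'I_N) (t : 'I_N) :
  #|[pred i : 'I_N | (i < t.+1)%N && p i]|
  = (#|[pred i : 'I_N | (i < t)%N && p i]| + p t)%N.
Proof.
rewrite (cardD1 t) inE ltnSn /= addnC; congr (_ + _)%N; apply: eq_card => i.
rewrite !inE ltnS leq_eqVlt; case: (eqVneq i t) => [->|ne] /=; first by rewrite ltnn.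
by move: ne; rewrite -val_eqE => /negbTE ->.
Qed.

Lemma acountS k (t : 'I_N) w :
  acount g k t.+1 w = (acount g k t w + (g t w == k))%N.
Proof. exact: (card_ltS (fun i => g i w == k)). Qed.

Lemma ccountS k (t : 'I_N) w :
  ccount g z k t.+1 w = (ccount g z k t w + ((g t w == k) && z t w))%N.
Proof. exact: (card_ltS (fun i => (g i w == k) && z i w)). Qed.

Lemma leq_acount k s t w : (s <= t)%N -> (acount g k s w <= acount g k t w)%N.
Proof.
move=> st; apply: subset_leq_card; apply/subsetP => i; rewrite !inE.
by case/andP=> /leq_trans-> // ->.
Qed.

Lemma acount_lt k (i : 'I_N) t w :
  (i < t)%N -> g i w = k -> (acount g k i w < acount g k t w)%N.
Proof. by move=> it gi; rewrite (leq_trans _ (leq_acount k w it)) // acountS gi eqxx addn1. Qed.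

Lemma acount0 k w : acount g k 0 w = 0%N.
Proof. by apply: eq_card0 => i. Qed.

Lemma ccount0 k w : ccount g z k 0 w = 0%N.
Proof. by apply: eq_card0 => i. Qed.

Definition acountL L k t w := minn (acount g k t w) L.

Definition ccountL L k t w :=
  #|[pred i : 'I_N | [&& (i < t)%N, g i w == k, (acount g k i w < L)%N & z i w]]|.

Lemma acountLS L k (t : 'I_N) w : acountL L k t.+1 w
  = (acountL L k t w + ((g t w == k) && (acount g k t w < L)%N))%N.
Proof. by rewrite /acountL acountS; case: eqP; case: ltnP => /=; lia. Qed.

Lemma ccountLS L k (t : 'I_N) w : ccountL L k t.+1 w
  = (ccountL L k t w + [&& g t w == k, (acount g k t w < L)%N & z t w])%N.
Proof. exact: (card_ltS (fun i => [&& g i w == k, (acount g k i w < L)%N & z i w])). Qed.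

Lemma ccountL0 L k w : ccountL L k 0 w = 0%N.
Proof. by apply: eq_card0 => i. Qed.

Lemma ccountL_id L k t w :
  (acount g k t w <= L)%N -> ccountL L k t w = ccount g z k t w.
Proof.
move=> aL; apply: eq_card => i; rewrite !inE.
case: ltnP => //= it; case: eqP => //= gi.
by rewrite (leq_trans (acount_lt it gi) aL).
Qed.

Lemma acount_ord_max k w : acount g k N w = #|[pred i : 'I_N | g i w == k]|.
Proof. by apply: eq_card => i; rewrite !inE ltn_ord. Qed.

Lemma sum_acount w : (\sum_k acount g k N w)%N = N.
Proof.
under eq_bigr => k _ do rewrite acount_ord_max -sum1_card big_mkcond.
rewrite exchange_big -[RHS]card_ord -sum1_card; apply: eq_bigr => i _.
by rewrite -big_mkcond (big_pred1 (g i w)) // => k; rewrite unfold_in /= eq_sym.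
Qed.

Lemma ccount_ord_max k w :
  ccount g z k N w = #|[pred i : 'I_N | (g i w == k) && z i w]|.
Proof. by apply: eq_card => i; rewrite !inE ltn_ord. Qed.

Lemma sum_ccount w : (\sum_k ccount g z k N w)%N = \sum_i (z i w : nat).
Proof.
under eq_bigr => k _ do rewrite ccount_ord_max -sum1_card big_mkcond.
rewrite exchange_big; apply: eq_bigr => i _; rewrite -big_mkcond.
rewrite (eq_bigl (fun k => (k == g i w) && z i w)) => [|k]; last first.
  by rewrite !inE eq_sym.
case: (z i w); last by rewrite big_pred0 // => k; rewrite andbF.
by rewrite (big_pred1 (g i w)) // => k; rewrite andbT.
Qed.

(* The conditioning of (c): the guesses g_0, ..., g_t and z_0, ..., z_(t-1). *)
Definition history (t : 'I_N) w := (upto g t.+1 w, upto z t w).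

Lemma history_guessed L (t : 'I_N) v w : history t v = history t w ->
  acount g (g t v) t v = acount g (g t w) t w
  /\ ccountL L (g t v) t v = ccountL L (g t w) t w.
Proof.
case=> /eq_in_map eqg /eq_in_map eqz.
have past (i : 'I_N) : (i < t)%N -> g i v = g i w /\ z i v = z i w.
  move=> it; split; [apply: eqg | apply: eqz]; rewrite mem_filter mem_enum ?it //.
  by rewrite ltnS ltnW.
have -> : g t v = g t w by apply: eqg; rewrite mem_filter mem_enum ltnS leqnn.
have eqa s : (s <= t)%N -> acount g (g t w) s v = acount g (g t w) s w.
  move=> st; apply: eq_card => i; rewrite !inE.
  by case: ltnP => //= is_; rewrite (past i (leq_trans is_ st)).1.
split; first exact: eqa.
apply: eq_card => i; rewrite !inE.
by case: ltnP => //= it; case: (past i it) => -> ->; rewrite eqa // ltnW.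
Qed.

End Counts.

Section Coupling.
Variables (R : realType) (m n : nat) (Omega : finType) (P : Omega -> R).
Hypothesis P_ge0 : forall w, 0 <= P w.
Hypothesis P_sum1 : \sum_w P w = 1.
Local Notation N := (m * n)%N.
Variables (g : 'I_N -> Omega -> 'I_n) (z : 'I_N -> Omega -> bool) (Y : nat).
Local Notation NY := (N - Y)%N.
Local Notation history := (history g z).
Local Notation acountL := (acountL g).
Local Notation ccountL := (ccountL g z).
Implicit Types (k : 'I_n) (w : Omega) (L : nat).

(* Hypotheses (a) and (c) of the statement, with Y a natural number. *)
Hypothesis ccount_bounds : forall k t w, (t <= N)%N -> 0 < P w ->
  (m <= ccount g z k t w + (NY - acount g k t w))%N /\ (ccount g z k t w <= m)%N.
Hypothesis condE_z : forall (t : 'I_N) w, 0 < P w -> (acount g (g t w) t w < NY)%N ->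
  condE P (fun v => (z t v)%:R) (history t) w
  = (m%:R - (ccount g z (g t w) t w)%:R) / (NY%:R - (acount g (g t w) t w)%:R).

(* E(z_t | history) by (c); once the guessed label is exhausted, (a) forces
   z_t = 0. *)
Definition hitprob (t : 'I_N) w : R :=
  if (acount g (g t w) t w < NY)%N then
    (m%:R - (ccount g z (g t w) t w)%:R) / (NY%:R - (acount g (g t w) t w)%:R)
  else 0.

Definition history_measurable (t : 'I_N) (f : Omega -> R) :=
  forall v w, history t v = history t w -> f v = f w.

Lemma hitprob_ge0 (t : 'I_N) w : 0 < P w -> 0 <= hitprob t w.
Proof.
move=> Pw; rewrite /hitprob; case: ltnP => // aNY.
have [_ cm] := ccount_bounds (g t w) (ltnW (ltn_ord t)) Pw.
by rewrite divr_ge0 // subr_ge0 ler_nat // ltnW.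
Qed.

Lemma z_exhausted (t : 'I_N) w :
  0 < P w -> (NY <= acount g (g t w) t w)%N -> z t w = false.
Proof.
move=> Pw exhausted.
have [lo _] := ccount_bounds (g t w) (ltnW (ltn_ord t)) Pw.
have [_ hi] := ccount_bounds (g t w) (ltn_ord t) Pw.
by move: hi; rewrite ccountS eqxx /=; case: (z t w) => //=; lia.
Qed.

Lemma Expect_z_mul (t : 'I_N) f : history_measurable t f ->
  Expect P (fun w => (z t w)%:R * f w) = Expect P (fun w => hitprob t w * f w).
Proof.
move=> f_meas; pose live w := (acount g (g t w) t w < NY)%N.
have live_meas : history_measurable t (fun w => (live w)%:R * f w).
  by move=> v w e; rewrite (f_meas _ _ e) /live (history_guessed 0 e).1.
transitivity (Expect P (fun w => (z t w)%:R * ((live w)%:R * f w))).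
  apply: (eq_Expect P_ge0) => w Pw; rewrite /live; case: ltnP => a_NY; first by rewrite mul1r.
  by rewrite z_exhausted // !mul0r.
rewrite (Expect_condE P_ge0 _ live_meas); apply: (eq_Expect P_ge0) => w Pw.
rewrite /hitprob /live; case: ltnP => a_NY; last by rewrite !mul0r mulr0.
by rewrite condE_z // mul1r.
Qed.

(* Only the guessed label moves in round t, so the expected change of a sum of
   per-label quantities is obtained by replacing z_t with [hitprob]. *)
Lemma Expect_label_step (t : 'I_N) (phi : 'I_n -> nat -> Omega -> R)
    (phi0 phi1 : Omega -> R) :
  (forall w k, k != g t w -> phi k t.+1 w = phi k t w) ->
  (forall w, phi (g t w) t.+1 w = if z t w then phi1 w else phi0 w) ->
  history_measurable t (fun w => phi1 w - phi0 w) ->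
  Expect P (fun w => \sum_k phi k t.+1 w) - Expect P (fun w => \sum_k phi k t w)
  = Expect P (fun w => phi0 w + hitprob t w * (phi1 w - phi0 w) - phi (g t w) t w).
Proof.
move=> other guessed meas; rewrite -ExpectB.
transitivity (Expect P (fun w =>
    phi0 w + (z t w)%:R * (phi1 w - phi0 w) - phi (g t w) t w)).
  apply: (eq_Expect P_ge0) => w _.
  rewrite (bigD1 (g t w)) // [X in _ - X](bigD1 (g t w)) //=.
  rewrite (eq_bigr (fun k => phi k t w)) => [|k]; last exact: other.
  by rewrite guessed; case: (z t w) => /=; ring.
by rewrite ExpectB ExpectD Expect_z_mul // -ExpectD -ExpectB.
Qed.

Lemma ccountL_NY k t w : 0 < P w -> (t <= N)%N -> ccountL NY k t w = ccount g z k t w.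
Proof.
move=> Pw; elim: t => [|t IH] tN; first by rewrite ccountL0 ccount0.
rewrite (ccountLS g z NY k (Ordinal tN)) (ccountS g z k (Ordinal tN)) /=.
rewrite IH ?(ltnW tN) //; congr (_ + _)%N.
case: eqP => //= gk; case: ltnP => //= exhausted.
by rewrite z_exhausted // gk.
Qed.

Definition rate : R := m%:R / NY%:R.

Lemma rate_ge0 : 0 <= rate.
Proof. by rewrite divr_ge0. Qed.

Definition excess L k t w : R := (ccountL L k t w)%:R - rate * (acountL L k t w)%:R.

Lemma excess0 L k w : excess L k 0 w = 0.
Proof. by rewrite /excess /acountL acount0 ccountL0 min0n mulr0 subrr. Qed.

Lemma excessS_other L (t : 'I_N) w k :
  k != g t w -> excess L k t.+1 w = excess L k t w.
Proof. by rewrite /excess acountLS ccountLS eq_sym => /negbTE ->; rewrite !addn0. Qed.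

Lemma excessS L (t : 'I_N) w : excess L (g t w) t.+1 w =
  if (acount g (g t w) t w < L)%N then excess L (g t w) t w + (z t w)%:R - rate
  else excess L (g t w) t w.
Proof.
rewrite /excess acountLS ccountLS eqxx /=.
by case: ltnP => _ /=; rewrite ?addn0 // !natrD; ring.
Qed.

Lemma hitprobE L (t : 'I_N) w : (L <= NY)%N -> (acount g (g t w) t w < L)%N ->
  hitprob t w = rate - excess L (g t w) t w / (NY%:R - (acount g (g t w) t w)%:R).
Proof.
move=> L_NY a_L; have a_NY := leq_trans a_L L_NY.
rewrite /hitprob a_NY /excess /rate /acountL (minn_idPl (ltnW a_L)).
rewrite ccountL_id ?(ltnW a_L) //.
have d_gt0 : 0 < NY%:R - (acount g (g t w) t w)%:R :> R by rewrite subr_gt0 ltr_nat.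
have NY_gt0 : 0 < NY%:R :> R by rewrite ltr0n (leq_ltn_trans _ a_NY).
by field; rewrite !gt_eqF.
Qed.

Lemma Expect_excess_sqr_step L (t : 'I_N) : (L <= NY)%N ->
  Expect P (fun w => \sum_k excess L k t.+1 w ^+ 2)
    - Expect P (fun w => \sum_k excess L k t w ^+ 2)
  <= Expect P (fun w =>
       if (acount g (g t w) t w < L)%N then hitprob t w + rate ^+ 2 else 0).
Proof.
move=> L_NY; pose live w := (acount g (g t w) t w < L)%N.
pose W w := excess L (g t w) t w.
rewrite (@Expect_label_step t (fun k t w => excess L k t w ^+ 2)
   (fun w => if live w then (W w - rate) ^+ 2 else W w ^+ 2)
   (fun w => if live w then (W w + 1 - rate) ^+ 2 else W w ^+ 2)).
- apply: (ler_Expect P_ge0) => w Pw; rewrite /live /W; case: ltnP => a_L; last first.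
    by rewrite subrr mulr0 addr0 subrr.
  have q_ge0 := hitprob_ge0 t Pw; have qE := hitprobE L_NY a_L.
  set q := hitprob t w in q_ge0 qE *; set W0 := excess L (g t w) t w in qE *.
  set d := NY%:R - _ in qE.
  have d_gt0 : 0 < d by rewrite /d subr_gt0 ltr_nat (leq_trans a_L).
  have drift : W0 * (q - rate) = - (W0 ^+ 2 / d) by rewrite qE; ring.
  have : 0 <= W0 ^+ 2 / d by rewrite divr_ge0 ?sqr_ge0 ?ltW.
  have : 0 <= q * rate by rewrite mulr_ge0 ?rate_ge0.
  have -> : (W0 - rate) ^+ 2 + q * ((W0 + 1 - rate) ^+ 2 - (W0 - rate) ^+ 2)
      - W0 ^+ 2 = 2 * (W0 * (q - rate)) + rate ^+ 2 + q - 2 * (q * rate) by ring.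
  rewrite drift; lra.
- by move=> w k /(excessS_other L) ->.
- by move=> w; rewrite excessS /live /W; case: ltnP => _; case: (z t w) => //=; rewrite addr0.

- move=> v w e; have [ac cc] := history_guessed L e.
  by rewrite /live /W /excess /acountL ac cc.
Qed.

Lemma Expect_excess_sqr L : (L <= NY)%N ->
  Expect P (fun w => \sum_k excess L k N w ^+ 2)
  <= \sum_(t < N) Expect P (fun w =>
       if (acount g (g t w) t w < L)%N then hitprob t w + rate ^+ 2 else 0).
Proof.
move=> L_NY; rewrite (@Expect_sum_telescope _ _ P _ N (fun k t w => excess L k t w ^+ 2)).
  by apply: ler_sum => t _; exact: Expect_excess_sqr_step.
by move=> k w; rewrite excess0 expr0n.
Qed.

(* Within the first L guesses of k this is m - NY (m - c) / (NY - a), and the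
   proportion (m - c) / (NY - a) of hits among the remaining draws is a
   martingale, as for draws without replacement from an urn. *)
Definition mart L k t w : R :=
  excess L k t w * NY%:R / (NY%:R - (acountL L k t w)%:R).

Lemma Expect_mart_step L (t : 'I_N) : (L < NY)%N ->
  Expect P (fun w => \sum_k mart L k t.+1 w) - Expect P (fun w => \sum_k mart L k t w) = 0.
Proof.
move=> L_NY; pose live w := (acount g (g t w) t w < L)%N.
pose W w := excess L (g t w) t w.
pose d w : R := NY%:R - (acountL L (g t w) t w + 1)%:R.
rewrite (@Expect_label_step t (mart L)
   (fun w => if live w then (W w - rate) * NY%:R / d w else mart L (g t w) t w)
   (fun w => if live w then (W w + 1 - rate) * NY%:R / d w else mart L (g t w) t w)).
- rewrite -(Expect_cst P_sum1 0); apply: (eq_Expect P_ge0) => w Pw; rewrite /live /W /d.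
  case: ltnP => a_L; last by rewrite subrr mulr0 addr0 subrr.
  rewrite (hitprobE (ltnW L_NY) a_L) /mart /acountL (minn_idPl (ltnW a_L)).
  have a_NY : (acount g (g t w) t w + 1 < NY)%N by rewrite addn1; apply: leq_ltn_trans a_L L_NY.
  have d1 : NY%:R - (acount g (g t w) t w + 1)%:R != 0 :> R.
    by rewrite subr_eq0 eqr_nat gtn_eqF.
  have d0 : NY%:R - (acount g (g t w) t w)%:R != 0 :> R.
    by rewrite subr_eq0 eqr_nat gtn_eqF // (leq_ltn_trans (leq_addr 1 _) a_NY).
  by rewrite natrD in d1 *; field; rewrite d0 d1.
- move=> w k k_other; rewrite /mart (excessS_other L k_other) acountLS.
  by move: k_other; rewrite eq_sym => /negbTE ->; rewrite addn0.
- move=> w; rewrite /mart excessS acountLS eqxx /= /live /W /d.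
  by case: ltnP => //= _; case: (z t w); rewrite /= ?addr0 ?addn0.
- move=> v w e; have [ac cc] := history_guessed L e.
  by rewrite /live /W /d /mart /excess /acountL ac cc.
Qed.

Lemma Expect_mart L : (L < NY)%N -> Expect P (fun w => \sum_k mart L k N w) = 0.
Proof.
move=> L_NY; rewrite (@Expect_sum_telescope _ _ P _ N (mart L)) => [|k w].
  by rewrite big1 // => t _; exact: Expect_mart_step.
by rewrite /mart excess0 !mul0r.
Qed.

Definition late L k t w : R := (ccount g z k t w)%:R - (ccountL L k t w)%:R.

Lemma Expect_late_step L (t : 'I_N) :
  Expect P (fun w => \sum_k late L k t.+1 w) - Expect P (fun w => \sum_k late L k t w)
  = Expect P (fun w => hitprob t w * (L <= acount g (g t w) t w)%N%:R).
Proof.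
pose over w : R := (L <= acount g (g t w) t w)%N%:R.
rewrite (@Expect_label_step t (late L) (fun w => late L (g t w) t w)
  (fun w => late L (g t w) t w + over w)).
- by apply: (eq_Expect P_ge0) => w _; rewrite /over; ring.
- move=> w k k_other; rewrite /late ccountS ccountLS.
  by move: k_other; rewrite eq_sym => /negbTE ->; rewrite !addn0.
- move=> w; rewrite /late ccountS ccountLS eqxx /over.
  case: (z t w); rewrite /= ?andbT ?andbF ?addn0 ?addr0 //.
  by rewrite !natrD; case: leqP => _ /=; ring.
- move=> v w e; have [ac _] := history_guessed L e.
  by rewrite /over !(addrC (late _ _ _ _)) !addrK ac.
Qed.

Lemma Expect_late L : Expect P (fun w => \sum_k late L k N w)
  = \sum_(t < N) Expect P (fun w => hitprob t w * (L <= acount g (g t w) t w)%N%:R).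
Proof.
rewrite (@Expect_sum_telescope _ _ P _ N (late L)) => [|k w].
  by apply: eq_bigr => t _; exact: Expect_late_step.
by rewrite /late ccount0 ccountL0 subrr.
Qed.

Hypothesis m_gt0 : (0 < m)%N.
Hypothesis Y_le : Y%:R <= Num.sqrt (m%:R : R) * n%:R / 6.
Hypothesis n_ge : 1200 * Num.sqrt (m%:R : R) <= n%:R.
Local Notation s := (Num.sqrt (m%:R : R)).

Lemma sqrt_ge1 : 1 <= s.
Proof. by rewrite -[X in X <= _]sqrtr1 ler_sqrt // ler1n. Qed.

Lemma sqrt_le_m : s <= m%:R.
Proof.
rewrite -{2}(sqr_sqrtr (ler0n R m)) expr2 ler_peMl ?sqrtr_ge0 //.
exact: sqrt_ge1.
Qed.

Lemma n_ge1200 : (1200 <= n)%N.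
Proof. by rewrite -(ler_nat R); apply: le_trans n_ge; rewrite ler_peMr // sqrt_ge1. Qed.

Lemma N_ge1200 : (1200 <= N)%N.
Proof. by have := n_ge1200; nia. Qed.

Lemma Y6_le_N : (6 * Y <= N)%N.
Proof.
rewrite -(ler_nat R) !natrM; have := sqrt_le_m; have : 0 <= n%:R :> R by [].
have -> : 6%:R = 6 :> R by []. move: Y_le; rewrite ler_pdivlMr //. nra.
Qed.

(* Within its first [cap] guesses a label still has more than N/3 unseen
   cards, while at most two labels are guessed more than [cap] times. *)
Definition cap : nat := (N %/ 3).+1.

Lemma cap_lt_NY : (cap < NY)%N.
Proof. by have := N_ge1200; have := Y6_le_N; rewrite /cap; lia. Qed.

Lemma N_lt_3cap : (N < 3 * cap)%N.
Proof. by rewrite /cap; lia. Qed.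

Lemma room_ge a : (a <= cap)%N -> N%:R / 3 <= NY%:R - a%:R :> R.
Proof.
move=> a_cap; rewrite ler_pdivrMr // -natrB; last by apply: ltnW (leq_ltn_trans a_cap cap_lt_NY).
rewrite mulrC -natrM ler_nat; have := N_ge1200; have := Y6_le_N; rewrite /cap in a_cap; lia.
Qed.

Lemma N_gt0 : 0 < N%:R :> R.
Proof. by rewrite ltr0n (leq_trans _ N_ge1200). Qed.

Lemma mn_neq0 : (n%:R != 0 :> R) && (m%:R != 0 :> R).
Proof. by rewrite -negb_or -mulf_eq0 -natrM mulnC; exact: lt0r_neq0 N_gt0. Qed.

Lemma room_gt0 a : (a <= cap)%N -> 0 < NY%:R - a%:R :> R.
Proof. by move=> /room_ge; apply: lt_le_trans; rewrite divr_gt0 ?N_gt0. Qed.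

Lemma inv_room_le a : (a <= cap)%N -> (NY%:R - a%:R)^-1 <= 3 / N%:R :> R.
Proof.
move=> /[dup] /room_gt0 room_pos /room_ge room.
rewrite ler_pdivlMr ?N_gt0 // mulrC ler_pdivrMr //; lra.
Qed.

Lemma rate_sqr_le : rate ^+ 2 <= m%:R / N%:R.
Proof.
have NY_gt0 : (0 < NY)%N by apply: leq_ltn_trans cap_lt_NY.
have key : (m * N <= NY * NY)%N by have := n_ge1200; have := Y6_le_N; nia.
have NY_neq0 : NY%:R != 0 :> R by rewrite pnatr_eq0 -lt0n.
rewrite -subr_ge0 (_ : _ - _ = m%:R * ((NY * NY)%:R - (m * N)%:R) / (N%:R * (NY * NY)%:R)).
  by rewrite divr_ge0 ?mulr_ge0 // subr_ge0 ler_nat.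
by rewrite /rate !natrM; field; rewrite NY_neq0 mn_neq0.
Qed.

Lemma rate_Y_le : rate * Y%:R <= s / 5.
Proof.
have NY_gt0 : 0 < NY%:R :> R by rewrite ltr0n (leq_ltn_trans _ cap_lt_NY).
have NY_ge : 5 * N%:R <= 6 * NY%:R :> R.
  by rewrite -!natrM ler_nat; have := Y6_le_N; lia.
have Y6 : 6 * Y%:R <= s * n%:R by move: Y_le; rewrite ler_pdivlMr // mulrC.
rewrite /rate mulrAC ler_pdivrMr // natrM in NY_ge *.
have := ler_wpM2l (ler0n R m) Y6; have := ler_wpM2l (sqrtr_ge0 (m%:R : R)) NY_ge.
nra.
Qed.

Lemma sum_capped_hitprob_le : \sum_(t < N) Expect P (fun w =>
    if (acount g (g t w) t w < cap)%N then hitprob t w + rate ^+ 2 else 0)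
  <= 4 * m%:R.
Proof.
have -> : 4 * m%:R = \sum_(t < N) (4 * (m%:R / N%:R)) :> R.
  by rewrite sumr_const card_ord -[_ *+ N]mulr_natr -mulrA divfK ?gt_eqF ?N_gt0.
apply: ler_sum => t _; rewrite -(Expect_cst P_sum1 (4 * _)).
apply: (ler_Expect P_ge0) => w Pw.
case: ltnP => a_cap; last by rewrite mulr_ge0 ?divr_ge0.
have [_ c_le] := ccount_bounds (g t w) (ltnW (ltn_ord t)) Pw.
have q_le : hitprob t w <= 3 * (m%:R / N%:R).
  rewrite /hitprob (ltn_trans a_cap cap_lt_NY).
  apply: le_trans (_ : m%:R * (NY%:R - (acount g (g t w) t w)%:R)^-1 <= _).
    by rewrite ler_wpM2r ?lerBlDr ?lerDl // invr_ge0 ltW // room_gt0 // ltnW.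
  by rewrite [X in _ <= X]mulrCA ler_wpM2l // inv_room_le // ltnW.
have := rate_sqr_le; lra.
Qed.

Lemma Expect_excess_cap_sqr : Expect P (fun w => \sum_k excess cap k N w ^+ 2) <= 4 * m%:R.
Proof.
apply: le_trans (Expect_excess_sqr (ltnW cap_lt_NY)) _.
exact: sum_capped_hitprob_le.
Qed.

Lemma over_cap_le2 w : (\sum_k (cap < acount g k N w) <= 2)%N.
Proof. by apply: sum_gt_le2; rewrite sum_acount N_lt_3cap. Qed.

Lemma sum_late_le w : 0 < P w -> \sum_k late cap k N w <= 2 * m%:R.
Proof.
move=> Pw; apply: le_trans (_ : _ <= \sum_k (cap < acount g k N w)%N%:R * m%:R) _.
  apply: ler_sum => k _; rewrite /late; case: ltnP => a_cap; last first.
    by rewrite ccountL_id // subrr mul0r.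
  have [_ c_le] := ccount_bounds k (leqnn N) Pw.
  by rewrite mul1r lerBlDr ler_wpDr // ler_nat.
by rewrite -mulr_suml -natr_sum ler_wpM2r // ler_nat over_cap_le2.
Qed.

Lemma Expect_excess_NY_sqr : Expect P (fun w => \sum_k excess NY k N w ^+ 2) <= 7 * m%:R.
Proof.
apply: le_trans (Expect_excess_sqr (leqnn NY)) _.
apply: le_trans (_ : _ <= \sum_(t < N) (Expect P (fun w =>
    if (acount g (g t w) t w < cap)%N then hitprob t w + rate ^+ 2 else 0)
  + Expect P (fun w => hitprob t w * (cap <= acount g (g t w) t w)%N%:R)
  + Expect P (fun _ => rate ^+ 2))) _.
  apply: ler_sum => t _; rewrite -!ExpectD; apply: (ler_Expect P_ge0) => w Pw.
  have q_ge0 := hitprob_ge0 t Pw; have e_ge0 := sqr_ge0 rate; have c_NY := cap_lt_NY.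
  case: (ltnP _ NY) => a_NY; case: (ltnP _ cap) => a_cap; rewrite /= ?mulr1n ?mulr0n ?mulr1 ?mulr0;
    first [lra | (rewrite /hitprob ltnNge a_NY /=; lra) | lia].
rewrite !big_split /= -Expect_late (Expect_cst P_sum1) sumr_const card_ord.
have : Expect P (fun w => \sum_k late cap k N w) <= 2 * m%:R.
  by rewrite -(Expect_cst P_sum1 (2 * _)); apply: (ler_Expect P_ge0) => w; exact: sum_late_le.
have : rate ^+ 2 *+ N <= m%:R.
  rewrite -mulr_natr -(divfK (lt0r_neq0 N_gt0) m%:R) ler_wpM2r //; exact: rate_sqr_le.
have := sum_capped_hitprob_le; lra.
Qed.

Lemma sum_sqr_capped_ratio w :
  \sum_k ((acountL cap k N w)%:R / (NY%:R - (acountL cap k N w)%:R)) ^+ 2 <= 4 :> R.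
Proof.
pose a k := acountL cap k N w.
have a_cap k : (a k <= cap)%N by rewrite /a /acountL geq_minr.
have ratio_sqr k :
  ((a k)%:R / (NY%:R - (a k)%:R)) ^+ 2 <= 9 * cap%:R / N%:R ^+ 2 * (a k)%:R :> R.
  have ratio_ge0 : 0 <= (a k)%:R / (NY%:R - (a k)%:R) :> R.
    by rewrite divr_ge0 // ltW // room_gt0.
  have ratio_le : (a k)%:R / (NY%:R - (a k)%:R) <= 3 / N%:R * (a k)%:R :> R.
    by rewrite mulrC ler_wpM2r // inv_room_le.
  apply: le_trans (_ : _ <= (3 / N%:R * (a k)%:R) ^+ 2) _; first by rewrite ler_sqr ?nnegrE // (le_trans ratio_ge0 ratio_le).
  rewrite (_ : (3 / N%:R * (a k)%:R) ^+ 2 = 9 * (a k)%:R / N%:R ^+ 2 * (a k)%:R).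
    apply: ler_wpM2r => //; apply: ler_wpM2r; first by rewrite invr_ge0 sqr_ge0.
    by apply: ler_wpM2l => //; rewrite ler_nat.
  by field; exact: mn_neq0.
have sum_a : \sum_k (a k)%:R <= N%:R :> R.
  rewrite -natr_sum ler_nat -[X in (_ <= X)%N](sum_acount g w); apply: leq_sum => k _.
  by rewrite /a /acountL geq_minl.
apply: le_trans (ler_sum _ (fun k _ => ratio_sqr k)) _; rewrite -mulr_sumr.
apply: le_trans (_ : _ <= 9 * cap%:R / N%:R ^+ 2 * N%:R) _.
  apply: ler_wpM2l => //.
  by apply: divr_ge0; [apply: mulr_ge0 | apply: sqr_ge0].
have : 9 * cap%:R <= 4 * N%:R :> R.
  rewrite -!natrM ler_nat /cap.
  by have := N_ge1200; lia.
by rewrite expr2 invfM !mulrA divfK ?gt_eqF ?N_gt0 // ler_pdivrMr ?N_gt0.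
Qed.

Lemma ler_div_sqrt c x : x <= c * m%:R -> x / (2 * s) <= c / 2 * s.
Proof.
have s_gt0 : 0 < s by apply: lt_le_trans sqrt_ge1.
have -> : c / 2 * s = c * m%:R / (2 * s).
  move: s_gt0 (sqr_sqrtr (ler0n R m)); set r := Num.sqrt _ => r_gt0 <-.
  by field; rewrite gt_eqF.
by move=> x_le; rewrite ler_pM2r // invr_gt0 mulr_gt0.
Qed.

Lemma Expect_excess_cap_le : `|Expect P (fun w => \sum_k excess cap k N w)| <= 4 * s.
Proof.
have s_gt0 : 0 < s by apply: lt_le_trans sqrt_ge1.
have -> : Expect P (fun w => \sum_k excess cap k N w)
    = Expect P (fun w => \sum_k excess cap k N w - \sum_k mart cap k N w).
  by rewrite ExpectB Expect_mart ?subr0 // cap_lt_NY.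
apply: le_trans (ler_norm_Expect P_ge0 _) _.
apply: le_trans (_ : _ <= Expect P (fun w =>
    (\sum_k excess cap k N w ^+ 2) / (2 * s) + 2 * s)) _; last first.
  rewrite ExpectD ExpectZr (Expect_cst P_sum1).
  have := ler_div_sqrt Expect_excess_cap_sqr; lra.
apply: (ler_Expect P_ge0) => w _.
pose r (k : 'I_n) : R := (acountL cap k N w)%:R / (NY%:R - (acountL cap k N w)%:R).
have -> : \sum_k excess cap k N w - \sum_k mart cap k N w
    = - \sum_k excess cap k N w * r k.
  rewrite -sumrB -sumrN; apply: eq_bigr => k _; rewrite /mart /r.
  have := room_gt0 (geq_minr (acount g k N w) cap).
  by move=> /lt0r_neq0 room_neq0; field.
rewrite normrN; apply: le_trans (ler_norm_sum _ _ _) _.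
apply: le_trans (ler_sum _ (fun k _ => ler_normM_amgm _ _ s_gt0)) _.
rewrite big_split /= -mulr_suml lerD2l -mulr_suml -mulr_sumr.
have := ler_wpM2l (ltW s_gt0) (sum_sqr_capped_ratio w); lra.
Qed.

Lemma Expect_excess_gap_le :
  `|Expect P (fun w => \sum_k (excess NY k N w - excess cap k N w))| <= 8 * s.
Proof.
have s_gt0 : 0 < s by apply: lt_le_trans sqrt_ge1.
apply: le_trans (ler_norm_Expect P_ge0 _) _.
apply: le_trans (_ : _ <= Expect P (fun w => (\sum_k excess NY k N w ^+ 2
    + \sum_k excess cap k N w ^+ 2) / (2 * s) + 2 * s)) _; last first.
  rewrite ExpectD ExpectZr ExpectD (Expect_cst P_sum1).
  have := Expect_excess_NY_sqr; have := Expect_excess_cap_sqr => cap_le NY_le.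
  have sum_le : Expect P (fun w => \sum_k excess NY k N w ^+ 2)
      + Expect P (fun w => \sum_k excess cap k N w ^+ 2) <= 11 * m%:R by lra.
  have := ler_div_sqrt sum_le; lra.
apply: (ler_Expect P_ge0) => w _; apply: le_trans (ler_norm_sum _ _ _) _.
apply: le_trans (_ : _ <= \sum_k ((excess NY k N w ^+ 2 + excess cap k N w ^+ 2)
    / (2 * s) + (cap < acount g k N w)%N%:R * s)) _.
  apply: ler_sum => k _; case: ltnP => a_cap /=; last first.
    have a_NY := leq_trans a_cap (ltnW cap_lt_NY).
    rewrite /excess /acountL (minn_idPl a_cap) (minn_idPl a_NY) !ccountL_id //.
    rewrite subrr normr0 ?mulr0n mul0r addr0 divr_ge0 ?addr_ge0 ?sqr_ge0 //.
    by rewrite mulr_ge0 // ltW.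
  have := ler_normM_amgm (excess NY k N w) 1 s_gt0.
  have := ler_normM_amgm (excess cap k N w) 1 s_gt0.
  rewrite !mulr1 expr1n mulr1 mulrDl mul1r; move: (ler_normB (excess NY k N w) (excess cap k N w)).
  lra.
rewrite big_split /= -mulr_suml big_split /= lerD2l -mulr_suml.
by rewrite ler_wpM2r ?(ltW s_gt0) // -natr_sum (ler_nat R _ 2) over_cap_le2.
Qed.

Lemma sum_exhausted_le w : 0 < P w ->
  `|\sum_k ((ccount g z k N w)%:R - rate * (acount g k N w)%:R - excess NY k N w)|
  <= rate * Y%:R.
Proof.
move=> Pw; have -> : \sum_k ((ccount g z k N w)%:R - rate * (acount g k N w)%:R
      - excess NY k N w)
    = - (rate * (\sum_k (acount g k N w - minn (acount g k N w) NY))%:R).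
  rewrite natr_sum mulr_sumr -sumrN; apply: eq_bigr => k _.
  by rewrite /excess ccountL_NY // /acountL natrB ?geq_minl //; ring.
rewrite normrN normrM !ger0_norm ?rate_ge0 // ler_wpM2l ?rate_ge0 // ler_nat.
have total : (\sum_k acount g k N w <= 2 * NY)%N.
  by rewrite sum_acount; have := Y6_le_N; lia.
by apply: leq_trans (sum_overflow_le total) _; rewrite sum_acount; lia.
Qed.

Lemma Expect_hits_close : `|\sum_i Expect P (fun w => (z i w)%:R) - m%:R| <= 300 * s.
Proof.
set A := Expect P (fun w => \sum_k excess cap k N w).
set B := Expect P (fun w => \sum_k (excess NY k N w - excess cap k N w)).
set C := Expect P (fun w => \sum_k ((ccount g z k N w)%:R
  - rate * (acount g k N w)%:R - excess NY k N w)).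
have decomp : Expect P (fun w => \sum_i (z i w)%:R) = rate * N%:R + A + B + C.
  rewrite /A /B /C -(Expect_cst P_sum1 (rate * N%:R)) -!ExpectD.
  apply: (eq_Expect P_ge0) => w _; rewrite -natr_sum -(sum_ccount g z w) natr_sum.
  have sum_a : N%:R = \sum_k (acount g k N w)%:R :> R by rewrite -natr_sum sum_acount.
  by rewrite [in rate * _]sum_a mulr_sumr -!big_split /=; apply: eq_bigr => k _; ring.
have gap : rate * N%:R - m%:R = rate * Y%:R.
  have rate_NY : rate * NY%:R = m%:R.
    by rewrite /rate divfK // pnatr_eq0 -lt0n (leq_ltn_trans _ cap_lt_NY).
  by rewrite -rate_NY natrB; [ring | have := Y6_le_N; lia].
rewrite -Expect_sum decomp (_ : _ - m%:R = rate * Y%:R + A + B + C); last first.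
  by rewrite -gap; ring.
have C_le : `|C| <= rate * Y%:R.
  apply: le_trans (ler_norm_Expect P_ge0 _) _; rewrite -[rate * _](Expect_cst P_sum1).
  by apply: (ler_Expect P_ge0) => w; exact: sum_exhausted_le.
have rY_ge0 : 0 <= rate * Y%:R by rewrite mulr_ge0 ?rate_ge0.
apply: le_trans (_ : _ <= rate * Y%:R + `|A| + `|B| + `|C|) _.
  apply: le_trans (ler_normD _ _) _; rewrite lerD2r.
  apply: le_trans (ler_normD _ _) _; rewrite lerD2r.
  by apply: le_trans (ler_normD _ _) _; rewrite ger0_norm.
have := Expect_excess_cap_le; have := Expect_excess_gap_le; rewrite -/A -/B.
have := rate_Y_le; have := sqrt_ge1; lra.
Qed.

End Coupling.

Lemma Yval_nat (R : realType) (m n : nat) :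
  exists2 Y : nat, Yval R m n = Y%:Z & Y%:R <= Num.sqrt (m%:R : R) * n%:R / 6.
Proof.
rewrite /Yval; set x := _ / 6.
have : 0 <= Num.floor x by rewrite floor_ge0 divr_ge0 ?mulr_ge0 ?sqrtr_ge0.
by have := floor_le x; case: (Num.floor x) => [Y Y_le _|//]; exists Y.
Qed.

Lemma ler_subr_max_nat (R : realDomainType) (M N a c : nat) :
  ((M%:R : R) - Num.max (N%:R - a%:R) 0 <= c%:R) = (M <= c + (N - a))%N.
Proof.
case: (leqP a N) => a_N.
  rewrite (_ : Num.max _ 0 = (N - a)%:R); first by rewrite lerBlDr -natrD ler_nat.
  by rewrite natrB //; apply/max_idPl; rewrite subr_ge0 ler_nat.
rewrite (_ : Num.max _ 0 = 0); last by apply/max_idPr; rewrite subr_le0 ler_nat ltnW.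
by rewrite subr0 ler_nat (_ : N - a = 0)%N ?addn0 //; apply/eqP; rewrite subn_eq0 ltnW.
Qed.

Unset Implicit Arguments. Set Strict Implicit.

Theorem lemma2p5
  (R : realType) (m n : nat)
  (hm : (0 < m)%N) (hn : (0 < n)%N)
  (hnm : 1200 * Num.sqrt (m%:R : R) <= n%:R)
  (* probability space *)
  (Omega : finType) (P : Omega -> R) (hP : is_prob_space P)
  (* the uniformly shuffled deck *)
  (deck : Omega -> (m * n).-tuple 'I_n)
  (hdeck : forall s, Prob P (fun w => deck w == s)
                     = (s \in arrangements m n)%:R / #|arrangements m n|%:R)
  (* the guesser's private randomness, independent of the deck *)
  (S : finType) (xi : Omega -> S)
  (hxi : forall s x, Prob P (fun w => (deck w == s) && (xi w == x))
                     = Prob P (fun w => deck w == s) * Prob P (fun w => xi w == x))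
  (* the fixed strategy, guesses g and hit indicators y *)
  (G : 'I_(m * n) -> S -> seq bool -> 'I_n)
  (g : 'I_(m * n) -> Omega -> 'I_n) (y : 'I_(m * n) -> Omega -> bool)
  (hg : forall (t : 'I_(m * n)) w, g t w = G t (xi w) (upto y t w))
  (hy : forall (t : 'I_(m * n)) w, y t w = (tnth (deck w) t == g t w))
  (* the coupled vector z *)
  (z : 'I_(m * n) -> Omega -> bool)
  (ha : forall (k : 'I_n) (t : nat) w, (t <= m * n)%N -> 0 < P w ->
          ((m%:R : R) - Num.max ((m * n)%:R - (acount g k t w)%:R - (Yval R m n)%:~R) 0
             <= (ccount g z k t w)%:R)
          /\ (ccount g z k t w)%:R <= (m%:R : R))
  (hb : forall (t : 'I_(m * n)) w,
          0 < Prob P (fun v => (upto g t.+1 v, upto y t.+1 v)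
                               == (upto g t.+1 w, upto y t.+1 w)) ->
          forall (b : 'I_(m * n) -> bool) (V : seq 'I_n * seq bool),
            condP P (fun v => [forall j : 'I_(m * n), (j <= t)%N ==> (z j v == b j)]
                               && ((upto g (m * n) v, upto y (m * n) v) == V))
                  (fun v => (upto g t.+1 v, upto y t.+1 v)) w
            = (\prod_(j < m * n | (j <= t)%N)
                 condP P (fun v => z j v == b j)
                       (fun v => (upto g t.+1 v, upto y t.+1 v)) w)
              * condP P (fun v => (upto g (m * n) v, upto y (m * n) v) == V)
                      (fun v => (upto g t.+1 v, upto y t.+1 v)) w)
  (hc : forall (t : 'I_(m * n)) w, 0 < P w ->
          ((acount g (g t w) t w)%:R < (m * n)%:R - (Yval R m n)%:~R :> R) ->
          condE P (fun v => (z t v)%:R) (fun v => (upto g t.+1 v, upto z t v)) w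
          = (m%:R - (ccount g z (g t w) t w)%:R)
            / ((m * n)%:R - (acount g (g t w) t w)%:R - (Yval R m n)%:~R))
  (hd : forall (t : 'I_(m * n)) w, 0 < P w ->
          condE P (fun v => (y t v)%:R) (fun v => (upto g t.+1 v, upto y t v)) w
            <= condE P (fun v => (z t v)%:R) (fun v => (upto g t.+1 v, upto z t v)) w ->
          y t w ==> z t w) :
  `| \sum_(i < m * n) Expect P (fun w => (z i w)%:R) - m%:R | <= 300 * Num.sqrt (m%:R : R).
Proof.
case: hP => P_ge0 P_sum1.
have [Y YE Y_le] := Yval_nat R m n.
have Y_le_N : (Y <= m * n)%N by have := Y6_le_N hm Y_le; lia.
have YR : (Yval R m n)%:~R = Y%:R :> R by rewrite YE.
have room w k t : (m * n)%:R - (acount g k t w)%:R - (Yval R m n)%:~R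
    = (m * n - Y)%:R - (acount g k t w)%:R :> R by rewrite YR natrB //; ring.
apply: (Expect_hits_close P_ge0 P_sum1 (g := g) (z := z) (Y := Y) _ _ hm Y_le hnm).
- move=> k t w tN Pw; have [lo hi] := ha k t w tN Pw.
  by split; [rewrite -(ler_subr_max_nat R) -room | rewrite -(ler_nat R)].
- move=> t w Pw a_lt; rewrite hc // ?room //.
  by rewrite YR -natrB // ltr_nat.
Qed.
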